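(* Let $K$ be an algebraically closed field, let $k\geq0$ be an integer, let $Q$ be the cyclic quiver with vertices $0,1,\dots,k$ and arrows $a_i:i\to i+1$ for $i<k$ and $a_k:k\to0$, and let $M_{\omega_1}$ be the $KQ$-module defined in the context. Then $\mathrm{Ext}^1_{KQ}\big(M_{\omega_1},\bigoplus_{\omega_1}KQ\big)\neq0$, where $\bigoplus_{\omega_1}KQ$ is the direct sum of $\omega_1$ copies of $KQ$.
   Context: Paths in a quiver are composable sequences of arrows written left to right, with trivial paths $e_v$; the path algebra $KQ$ has basis all paths, product = concatenation when the target of the first equals the source of the second, else $0$. Modules are right modules. $\omega_1$ is the first uncountable ordinal, $\mathrm{Lim}$ the class of nonzero limit ordinals. Fix a ladder system: for each $\alpha\in\omega_1\cap\mathrm{Lim}$ a set $C_\alpha=\{\zeta^\alpha_n:n\in\omega\}$, strictly increasingly enumerated and cofinal in $\alpha$, such that each $\zeta^\alpha_n$ equals $\delta+n+1$ for some $\delta\in\alpha\cap(\{0\}\cup\mathrm{Lim})$. For $\xi<\omega_1$ let $F^\xi=KQ$ if $\xi\notin\mathrm{Lim}$ and $F^\xi=\bigoplus_{n\in\omega}KQ$ if $\xi\in\mathrm{Lim}$; let $F=\bigoplus_{\xi<\omega_1}F^\xi$ (finite-support functions, coordinatewise operations). For $\gamma\in\omega_1\setminus\mathrm{Lim}$, $e^\gamma_0\in F$ has support $\{\gamma\}$ and value $e_0$ there; for $\alpha\in\mathrm{Lim}$ and $n\in\omega$, $e^{\alpha,n}_0\in F$ has support $\{\alpha\}$ and value at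 $\alpha$ the element of $\bigoplus_{m}KQ$ with support $\{n\}$ and value $e_0$. Let $G_\alpha$ be the $KQ$-submodule of $F$ generated by $\{e^{\zeta^\alpha_n}_0-e^{\alpha,n}_0+e^{\alpha,n+1}_0a_0a_1\cdots a_k:n\in\omega\}$, let $I=\sum_{\alpha\in\omega_1\cap\mathrm{Lim}}G_\alpha$, and let $M_{\omega_1}$ be the $KQ$-submodule of $F/I$ generated by $\{e^\gamma_0+I:\gamma\in\omega_1\setminus\mathrm{Lim}\}\cup\{e^{\alpha,n}_0+I:\alpha\in\omega_1\cap\mathrm{Lim},n\in\omega\}$. *)

From HB Require Import structures.
From mathcomp Require Import all_boot all_order all_algebra.
From mathcomp Require Import boolp.
From mathcomp Require Import finmap.
From mathcomp.multinomials Require Import monalg.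

Set Implicit Arguments.
Unset Strict Implicit.
Unset Printing Implicit Defensive.

Import Order.TTheory GRing.Theory.
Local Open Scope ring_scope.

(* The cyclic quiver Q with vertices 0..k and arrows a_i : i -> i+1 (i<k),
   a_k : k -> 0.  A path of Q is determined by its source vertex and its
   length (the trivial path e_v has length 0); paths are written left to
   right.                                                              *)
Definition qpath (k : nat) := ('I_k.+1 * nat)%type.

Definition psrc k (p : qpath k) : 'I_k.+1 := p.1.
Definition plen k (p : qpath k) : nat := p.2.
Definition ptgt k (p : qpath k) : nat := ((val p.1 + p.2) %% k.+1)%N.
Definition composable k (p q : qpath k) : bool := ptgt p == val (psrc q).
(* concatenation p q (meaningful when composable) *)
Definition pcat k (p q : qpath k) : qpath k := (p.1, (p.2 + q.2)%N).
Definition triv k (v : 'I_k.+1) : qpath k := (v, 0%N).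
(* the path a_0 a_1 ... a_k (from 0 back to 0, length k+1) *)
Definition cycle0 k : qpath k := (ord0, k.+1).

(* Since KQ is the K-algebra with basis the paths, a
   right KQ-module is a K-vector space with a K-linear right action of
   each path, satisfying  (v.p).q = v.(pq)  if p,q composable, 0 otherwise,
   and  sum_v v.e_v = v  (as 1 = sum_v e_v in KQ).                      *)
Record rmod (K : fieldType) (k : nat) := RMod {
  rcar :> lmodType K;
  ract : rcar -> qpath k -> rcar;
  ract_lin : forall p (a : K) (u v : rcar),
      ract (a *: u + v) p = a *: ract u p + ract v p;
  ract_comp : forall v p q,
      ract (ract v p) q = if composable p q then ract v (pcat p q) else 0;
  ract_unit : forall v, \sum_(i < k.+1) ract v (triv i) = v
}.

Definition is_hom (K : fieldType) (k : nat) (V W : lmodType K)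
    (aV : V -> qpath k -> V) (aW : W -> qpath k -> W) (f : V -> W) : Prop :=
  (forall (a : K) u v, f (a *: u + v) = a *: f u + f v) /\
  (forall v p, f (aV v p) = aW (f v) p).

(* Ext^1_{KQ}(M, N) <> 0 : there is a non-split short exact sequence
   0 -> N -> E -> M -> 0 of right KQ-modules (Yoneda description).     *)
Definition ext1_nonzero (K : fieldType) (k : nat) (M : rmod K k)
    (N : lmodType K) (aN : N -> qpath k -> N) : Prop :=
  exists (E : rmod K k) (i : N -> E) (pi : E -> M),
    [/\ is_hom aN (@ract _ _ E) i,
        is_hom (@ract _ _ E) (@ract _ _ M) pi,
        injective i,
        (forall m : M, exists e : E, pi e = m) &
        (forall e : E, pi e = 0 <-> exists n, e = i n)] /\
    ~ (exists s : M -> E,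
         is_hom (@ract _ _ M) (@ract _ _ E) s /\ forall m, pi (s m) = m).

(* Free right KQ-modules  (+)_{b in B} KQ : finitely supported K-valued
   functions on B x paths, with the path action extended linearly.     *)
Definition freeKQ (K : fieldType) (k : nat) (B : choiceType) :=
  {malg K[(B * qpath k)%type]}.

Definition freeact (K : fieldType) (k : nat) (B : choiceType)
    (x : freeKQ K k B) (q : qpath k) : freeKQ K k B :=
  \sum_(b <- enum_fset (msupp x))
     x@_b *: (if composable b.2 q then << (b.1, pcat b.2 q) >> else 0).

(* omega_1, given as a well-ordered type (W, <=) that is uncountable and
   all of whose proper initial segments are countable; this characterizes
   omega_1 up to order isomorphism.                                    *)
Section Omega1.
Context {d : Order.disp_t} (W : orderType d).
Local Open Scope order_scope.

Definition is_omega1 : Prop :=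
  [/\ (forall P : W -> Prop, (exists x, P x) ->
          exists x, P x /\ forall y, P y -> x <= y),
      ~ (exists f : W -> nat, injective f) &
      (forall a : W, exists f : W -> nat,
          forall x y, x < a -> y < a -> f x = f y -> x = y)].

Definition is_zero (a : W) : Prop := forall b, a <= b.
Definition is_lim (a : W) : Prop :=
  (exists b, b < a) /\ (forall b, b < a -> exists c, b < c /\ c < a).
Definition limb (a : W) : bool := `[< is_lim a >].
Definition is_succ (a b : W) : Prop := a < b /\ forall c, a < c -> b <= c.
Fixpoint iter_succ (n : nat) (a b : W) : Prop :=
  match n with
  | 0%N => b = a
  | n'.+1 => exists c, iter_succ n' a c /\ is_succ c b
  end.

Definition ladder_system (C : W -> nat -> W) : Prop :=
  forall al, is_lim al ->
    [/\ (forall n, C al n < C al n.+1),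
        (forall n, C al n < al),
        (forall b, b < al -> exists n, b <= C al n) &
        (forall n, exists de, [/\ de < al, is_zero de \/ is_lim de &
                                   iter_succ n.+1 de (C al n)])].
End Omega1.

(* The module F = (+)_{xi < omega_1} F^xi, F^xi = KQ (xi not limit) or
   (+)_{n} KQ (xi limit): free on the index set
   {(xi, n) | xi limit or n = 0}.                                      *)
Section Momega1.
Context (K : fieldType) (k : nat) {d : Order.disp_t} (W : orderType d)
        (C : W -> nat -> W).

Definition Fidx := {x : (W * nat)%type | limb x.1 || (x.2 == 0%N)}.
Definition Fmod := freeKQ K k Fidx.
Definition Fact : Fmod -> qpath k -> Fmod := @freeact K k Fidx.

(* e^xi_0 (n = 0, xi not limit) and e^{xi,n}_0 (xi limit) *)
Definition eF (xi : W) (n : nat) : Fmod :=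
  match @insub _ (fun x : (W * nat)%type => limb x.1 || (x.2 == 0%N)) Fidx
               (xi, n) with
  | Some i => << (i, triv (@ord0 k)) >>
  | None => 0
  end.

Definition sub_closed (P : Fmod -> Prop) : Prop :=
  [/\ P 0, (forall (a : K) u v, P u -> P v -> P (a *: u + v)) &
      (forall u q, P u -> P (Fact u q))].
Definition gen_sub (T : Fmod -> Prop) (x : Fmod) : Prop :=
  forall P, sub_closed P -> (forall t, T t -> P t) -> P x.

Definition Ggen (al : W) (n : nat) : Fmod :=
  eF (C al n) 0 - eF al n + Fact (eF al n.+1) (cycle0 k).

Definition Isub : Fmod -> Prop :=
  gen_sub (fun t => exists al n, is_lim al /\ t = Ggen al n).

Definition Ssub : Fmod -> Prop :=
  gen_sub (fun t => (exists g, ~ is_lim g /\ t = eF g 0) \/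
                    (exists al n, is_lim al /\ t = eF al n)).

(* M_{omega_1} is the submodule of F/I generated by the images of the e's,
   i.e. (S + I)/I = S/I (I is contained in S).  We say that (M, pi)
   realizes M_{omega_1} if pi restricted to S is a surjective
   KQ-homomorphism S -> M with kernel I, i.e. M is M_{omega_1} up to
   isomorphism.                                                        *)
Definition realizes_Momega1 (M : rmod K k) (pi : Fmod -> M) : Prop :=
  [/\ (forall (a : K) u v, Ssub u -> Ssub v -> pi (a *: u + v) = a *: pi u + pi v),
      (forall u q, Ssub u -> pi (Fact u q) = ract (pi u) q),
      (forall m : M, exists u, Ssub u /\ pi u = m) &
      (forall u, Ssub u -> (pi u = 0 <-> Isub u))].
End Momega1.

Definition sumKQ (K : fieldType) (k : nat) {d : Order.disp_t} (W : orderType d)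
  := freeKQ K k W.

(** Let N = ⊕_{ω₁} KQ and let N̂ ⊇ N be the module of all formal, possibly
    infinite, combinations of the basis paths of N.  The relations of G_α are
    solved in N̂ by the KQ-map ψ : F → N̂ with ψ(e^{α,n}_0) = −∑_m e^α_0 (a_0⋯a_k)^m
    for limit α and ψ(e^γ_0) = 0 otherwise: ψ sends every generator of G_α
    into N.  Pushing 0 → I → S → M_{ω₁} → 0 out along ψ|_I gives an
    extension 0 → N → E → M_{ω₁} → 0.  A splitting of it yields a KQ-map
    S → N̂ differing from ψ by a map δ : S → N.  As y_j = y_{j+1} (a_0⋯a_k) + e_0
    has no finitely supported solution, for every limit α some rung ζ < α of
    its ladder has δ(e^ζ_0) with a nonzero α-coordinate.  So every limit α lies
    in the finite support of δ(e^ζ_0) for some ζ < α, which is impossible in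
    ω₁: the map sending ζ to a bound of that support has a limit closure point. *)

From HB Require Import structures.
From mathcomp Require Import all_boot all_order all_algebra.
From mathcomp Require Import boolp functions.
From mathcomp Require Import finmap.
From mathcomp.multinomials Require Import monalg.

Set Implicit Arguments.
Unset Strict Implicit.
Unset Printing Implicit Defensive.

Import Order.TTheory GRing.Theory.
Local Open Scope ring_scope.

Section Omega1.
Local Open Scope order_scope.
Context {d : Order.disp_t} (W : orderType d) (hW : is_omega1 W).

Lemma countable_image_bounded (I : Type) (h : I -> nat) (f : I -> W) :
  injective h -> exists u, forall i, f i < u.
Proof.
move=> h_inj; apply: contrapT => unbounded.
have above u : exists i, u <= f i.
  apply: contrapT => none; apply: unbounded; exists u => i.
  by rewrite ltNge; apply/negP => le_u; apply: none; exists i.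
have [_ W_uncountable W_segments] := hW.
pose iu u := sval (cid (above u)).
have iuP u : u <= f (iu u) := svalP (cid (above u)).
pose code a := sval (cid (W_segments a)).
have code_inj a x y : x < a -> y < a -> code a x = code a y -> x = y.
  exact: svalP (cid (W_segments a)) x y.
apply: W_uncountable; exists (fun u => choice.pickle
  (h (iu u), if u == f (iu u) then 0%N else (code (f (iu u)) u).+1)).
move=> u v /(pcan_inj choice.pickleK) [/h_inj iu_eq].
rewrite -iu_eq; set z := f (iu u).
have lt_z w : w <= z -> w != z -> w < z by rewrite lt_neqAle => -> ->.
case: eqP => [-> | /eqP u_z]; case: eqP => [-> | /eqP v_z] //= [].
apply: code_inj; first exact: lt_z (iuP u) u_z.
by apply: lt_z v_z; rewrite /z iu_eq.
Qed.

Lemma segment_image_bounded (a : W) (f : W -> W) :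
  exists u, forall g, g <= a -> f g < u.
Proof.
have [_ _ W_segments] := hW; have [F F_inj] := W_segments a.
pose I := {g : W | g <= a}.
pose h (g : I) := if val g == a then 0%N else (F (val g)).+1.
have h_inj : injective h.
  have lt_a (g : I) : val g != a -> val g < a by rewrite lt_neqAle (valP g) andbT.
  move=> g1 g2; rewrite /h; case: eqP => [g1a | /eqP/lt_a g1a].
    by case: eqP => [g2a _ | //]; apply: val_inj; rewrite g1a g2a.
  by case: eqP => [// | /eqP/lt_a g2a [] /(F_inj _ _ g1a g2a)/val_inj].
have [u hu] := countable_image_bounded (f \o val) h_inj.
by exists u => g ga; apply: (hu (exist _ g ga)).
Qed.

Lemma exists_closed_limit (f : W -> W) :
  exists2 l, is_lim l & forall g, g < l -> f g < l.
Proof.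
have [W_wf W_uncountable _] := hW.
have [w0 _] : exists w : W, True.
  apply: contrapT => W_empty; apply: W_uncountable; exists (fun=> 0%N) => x.
  by case: W_empty; exists x.
have step b : exists u, forall g, g <= b -> Order.max g (f g) < u.
  exact: segment_image_bounded.
pose next b := sval (cid (step b)).
have nextP b g : g <= b -> g < next b /\ f g < next b.
  by move=> gb; apply/andP; rewrite -gt_max; apply: (svalP (cid (step b))).
pose bs n := iter n next w0.
have bs_lt n : bs n < bs n.+1 by apply: (nextP _ _ (lexx _)).1.
have [u bs_u] := countable_image_bounded bs (@inj_id nat).
have [l [bs_l l_min]] := W_wf (fun x => forall n, bs n <= x)
  (ex_intro _ u (fun n => ltW (bs_u n))).
have below_l b : b < l -> exists n, b < bs n.
  move=> bl; apply: contrapT => none.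
  suff : l <= b by rewrite leNgt bl.
  by apply: l_min => n; rewrite leNgt; apply/negP => lt_b; apply: none; exists n.
exists l.
  split; first by exists (bs 0%N); exact: lt_le_trans (bs_lt 0%N) (bs_l 1%N).
  move=> b /below_l [n b_n]; exists (bs n); split => //.
  exact: lt_le_trans (bs_lt n) (bs_l n.+1).
move=> g /below_l [n g_n].
exact: lt_le_trans (nextP _ _ (ltW g_n)).2 (bs_l n.+1).
Qed.

Lemma no_regressive_finite_cover (A : W -> seq W) :
  ~ (forall a, is_lim a -> exists2 g, g < a & a \in A g).
Proof.
move=> cover.
have bounded g : exists u, forall x, x \in A g -> x < u.
  have [u hu] := countable_image_bounded
    (fun i : 'I_(size (A g)) => nth g (A g) i) val_inj.
  exists u => x xA; have := hu (Ordinal (etrans (index_mem x (A g)) xA)).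
  by rewrite /= nth_index.
have [l l_lim l_closed] := exists_closed_limit (fun g => sval (cid (bounded g))).
have [g gl lS] := cover l l_lim.
have := svalP (cid (bounded g)) l lS.
by rewrite ltNge (ltW (l_closed g gl)).
Qed.
End Omega1.

Section LinearExtension.
Context (K : fieldType) (T : choiceType) (V : lmodType K) (F : T -> V).

Definition mlift (x : {malg K[T]}) : V := \sum_(b <- msupp x) x@_b *: F b.

Lemma mliftEw (D : {fset T}) x : (msupp x `<=` D)%fset ->
  mlift x = \sum_(b <- D) x@_b *: F b.
Proof.
move=> le; rewrite /mlift (big_fset_incl _ le) // => b _ /mcoeff_outdom ->.
by rewrite scale0r.
Qed.

Lemma mlift_linear : linear mlift.
Proof.
move=> a x y; pose D := (msupp x `|` msupp y `|` msupp (a *: x + y))%fset.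
have [Dx Dy Dxy] : [/\ msupp x `<=` D, msupp y `<=` D & msupp (a *: x + y) `<=` D]%fset.
  by split; apply/fsubsetP => b bx; rewrite !inE bx ?orbT.
rewrite !(mliftEw Dx, mliftEw Dy, mliftEw Dxy).
rewrite scaler_sumr -big_split; apply: eq_bigr => b _ /=.
by rewrite mcoeffD mcoeffZ scalerDl scalerA.
Qed.

HB.instance Definition _ :=
  GRing.isLinear.Build K {malg K[T]} V *:%R mlift mlift_linear.

Lemma mliftU b : mlift << b >> = F b.
Proof. by rewrite (mliftEw msuppU_le) big_seq_fset1 mcoeffUU scale1r. Qed.
End LinearExtension.

Lemma mlift_comp (K : fieldType) (T : choiceType) (V V' : lmodType K)
    (f : V -> V') (F : T -> V) x :
  linear f -> f (mlift F x) = mlift (f \o F) x.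
Proof.
move=> f_lin; rewrite /mlift; elim: (enum_fset _) => [|b r IH].
  by rewrite !big_nil -(subrr 0) (zmod_morphism_linear f_lin) subrr.
by rewrite !big_cons f_lin IH.
Qed.

Lemma malg_linear_ext (K : fieldType) (T : choiceType) (V : lmodType K)
    (f g : {malg K[T]} -> V) :
  linear f -> linear g -> (forall b, f << b >> = g << b >>) -> f =1 g.
Proof.
move=> f_lin g_lin fg x.
have -> : x = mlift (fun b => << b >>) x.
  rewrite {1}[x]monalgE; apply: eq_bigr => b _.
  by apply/malgP => c; rewrite mcoeffZ !mcoeffU mulr_natr.
by rewrite !mlift_comp //; apply: eq_bigr => b _; rewrite /= fg.
Qed.

Lemma ract0 (K : fieldType) (k : nat) (M : rmod K k) q : ract (0 : M) q = 0.
Proof.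
have := zmod_morphism_linear (s := *:%R) (f := fun v : M => ract v q) (ract_lin q).
by move=> /(_ 0 0); rewrite subrr => ->; rewrite subrr.
Qed.

Section FormalSeries.
Context (K : fieldType) (k : nat) (B : choiceType).

(* Coefficient functions of the formal, possibly infinite, combinations of the
   basis B × paths of ⊕_B KQ; [sact q] is right multiplication by the path q. *)
Definition fseries := B * qpath k -> K^o.
HB.instance Definition _ := GRing.Lmodule.on fseries.

Definition sact (q : qpath k) (x : fseries) : fseries := fun c =>
  if (q.2 <= c.2.2)%N && composable (c.2.1, (c.2.2 - q.2)%N) q
  then x (c.1, (c.2.1, (c.2.2 - q.2)%N)) else 0.

Lemma sact_linear q : linear (sact q).
Proof.
move=> a x y; apply/funext => c; rewrite /sact !fctE.
by case: ifP => _ //; rewrite scaler0 addr0.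
Qed.

HB.instance Definition _ q :=
  GRing.isLinear.Build K fseries fseries *:%R (sact q) (sact_linear q).

Lemma sact0 q : sact q 0 = 0.
Proof. exact: raddf0. Qed.

Lemma sactN q x : sact q (- x) = - sact q x.
Proof. exact: raddfN. Qed.

Lemma sact_comp (x : fseries) p q :
  sact q (sact p x) = if composable p q then sact (pcat p q) x else 0.
Proof.
apply/funext => -[b [v L]]; case: p => pv pl; case: q => qv ql.
rewrite (fun_if (fun y : fseries => y (b, (v, L)))).
rewrite /sact /composable /pcat /ptgt /psrc /=.
rewrite -subnDA [(ql + pl)%N]addnC.
have [le_L | lt_L] := leqP (pl + ql) L; last first.
  case: ifP => [/andP [ql_L _] | _]; last by case: ifP.
  by rewrite leq_subRL // addnC leqNgt lt_L /=; case: ifP.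
have ql_L : (ql <= L)%N by apply: leq_trans le_L; rewrite leq_addl.
rewrite ql_L (leq_subRL _ ql_L) [(ql + pl)%N]addnC le_L /=.
have [hv | hv] := eqVneq ((v + (L - (pl + ql))) %% k.+1)%N pv; last first.
  by case: ifP; case: ifP.
have e : (L - (pl + ql) + pl = L - ql)%N.
  by rewrite [(pl + ql)%N]addnC subnDA subnK // leq_subRL // addnC.
by rewrite -hv modnDml -addnA e.
Qed.

Lemma sact_unit (x : fseries) : \sum_(i < k.+1) sact (triv i) x = x.
Proof.
apply/funext => -[b [v L]]; rewrite fct_sumE /sact /triv /composable /ptgt /psrc /= subn0.
pose i0 : 'I_k.+1 := Ordinal (ltn_pmod (v + L) (ltn0Sn k)).
rewrite (bigD1 i0) //= eqxx big1 ?addr0 // => i i_i0.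
by case: eqP => // vL; case/eqP: i_i0; apply/val_inj; rewrite /= vL.
Qed.

Definition series_of (x : freeKQ K k B) : fseries := fun c => x@_c.

Lemma series_of_linear : linear series_of.
Proof. by move=> a x y; apply/funext => c; rewrite /series_of mcoeffD mcoeffZ. Qed.

HB.instance Definition _ :=
  GRing.isLinear.Build K (freeKQ K k B) fseries *:%R series_of series_of_linear.

Lemma series_ofB : {morph series_of : x y / x - y}.
Proof. exact: raddfB. Qed.

Lemma series_of_inj : injective series_of.
Proof. by move=> x y xy; apply/malgP => c; have := congr1 (fun f => f c) xy. Qed.

Definition basis_act (q : qpath k) (b : B * qpath k) : freeKQ K k B :=
  if composable b.2 q then << (b.1, pcat b.2 q) >> else 0.

Lemma freeactE (x : freeKQ K k B) q : freeact x q = mlift (basis_act q) x.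
Proof. by []. Qed.

Lemma freeact_linear q : linear (@freeact K k B ^~ q).
Proof. by move=> a x y; rewrite !freeactE mlift_linear. Qed.

Lemma series_of_act (x : freeKQ K k B) q :
  series_of (freeact x q) = sact q (series_of x).
Proof.
move: x; apply: malg_linear_ext => [a x y | a x y | b].
- by rewrite freeact_linear linearP.
- by rewrite !linearP.
apply/funext => -[c [w L]]; rewrite freeactE mliftU /basis_act /sact.
rewrite (fun_if (fun y => series_of y (c, (w, L)))) /series_of mcoeff0 !mcoeffU.
case: b => b [bv bl] /=; case: q => qv ql.
rewrite /composable /pcat /ptgt /psrc /= !xpair_eqE /= !mulrb.
have [<- | bl_L] := eqVneq (bl + ql)%N L.
  rewrite leq_addl addnK eqxx !andbT /=.
  by case: (eqVneq bv w) => [-> // | _]; rewrite andbF !if_same.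
rewrite !andbF !if_same; case: ifP => // /andP [ql_L _].
by rewrite -(eqn_add2r ql) subnK // (negbTE bl_L) !andbF.
Qed.

(* ∑_m b·z^m p, where z is the cycle of length k+1 at the source of p. *)
Definition cycle_series (b : B) (p : qpath k) : fseries := fun c =>
  if [&& c.1 == b, c.2.1 == p.1, (p.2 <= c.2.2)%N & (k.+1 %| c.2.2 - p.2)%N]
  then 1 else 0.

Lemma sact_cycle_series b p q :
  sact q (cycle_series b p) =
  if composable p q then cycle_series b (pcat p q) else 0.
Proof.
apply/funext => -[c [w L]]; case: p => pv pl; case: q => qv ql.
rewrite (fun_if (fun y : fseries => y (c, (w, L)))).
rewrite /sact /cycle_series /composable /pcat /ptgt /psrc /=.
have [-> | _] := eqVneq c b; last by rewrite !if_same.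
have [-> | _] := eqVneq w pv; last by rewrite !andbF !if_same.
rewrite !andTb.
have [le_L | lt_L] := leqP (pl + ql) L; last first.
  rewrite andFb; case: ifP => [/andP [ql_L _] | _]; last by case: ifP.
  by rewrite leq_subRL // addnC leqNgt lt_L /=; case: ifP.
have ql_L : (ql <= L)%N by apply: leq_trans le_L; rewrite leq_addl.
have e : (L - ql = L - (pl + ql) + pl)%N.
  by rewrite [(pl + ql)%N]addnC subnDA subnK // leq_subRL // addnC.
rewrite ql_L e leq_addl addnK /=.
have [dvd_k | _] := boolP (k.+1 %| L - (pl + ql))%N; last by rewrite !if_same.
by rewrite addnCA -modnDml (eqP dvd_k) add0n.
Qed.

Lemma cycle_series_sub_sact b v :
  cycle_series b (triv v) - sact (v, k.+1) (cycle_series b (triv v)) =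
  series_of << (b, triv v) >>.
Proof.
rewrite sact_cycle_series /composable /ptgt /triv /= addn0 modn_small // eqxx.
apply/funext => -[c [w L]]; rewrite !fctE /cycle_series /series_of mcoeffU /=.
rewrite !xpair_eqE mulrb add0n subn0 [c == b]eq_sym [w == v]eq_sym.
case: eqP => [_ | _]; last by rewrite subrr.
case: eqP => [_ | _]; last by rewrite subrr.
rewrite /=; case: L => [|L]; first by rewrite dvdn0 ltn0 subr0.
case: leqP => [lt_Lk | le_kL]; last by rewrite dvdn_subl ?dvdnn // subrr.
suff -> : (k.+1 %| L.+1)%N = false by rewrite subrr.
by apply/negbTE/negP => /(dvdn_leq (ltn0Sn L)); rewrite ltnS leqNgt lt_Lk.
Qed.

Lemma freeKQ_bounded_length (x : freeKQ K k B) :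
  exists L, forall c, (L < c.2.2)%N -> x@_c = 0.
Proof.
exists (\sum_(c <- msupp x) c.2.2)%N => c lt_c; apply: mcoeff_outdom.
apply: contraTN lt_c => c_x; rewrite -leqNgt.
by rewrite (big_rem _ c_x) leq_addr.
Qed.

Lemma cycle_solution_not_finite (y : nat -> fseries) b (x : freeKQ K k B) :
  (forall j p, y j (b, p) =
     sact (cycle0 k) (y j.+1) (b, p) + series_of << (b, triv ord0) >> (b, p)) ->
  y 0%N <> series_of x.
Proof.
move=> y_rel y0.
have ones m j : y j (b, (ord0, (m * k.+1)%N)) = 1.
  elim: m j => [|m IH] j; rewrite y_rel /sact /series_of mcoeffU /=.
    by rewrite eqxx add0r.
  rewrite mulSn leq_addr addKn /composable /ptgt /= add0n modnMl eqxx IH.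
  by rewrite /triv !xpair_eqE addSn /= !andbF mulr0n addr0.
have [L x_L] := freeKQ_bounded_length x.
have := ones L.+1 0%N; rewrite y0 /series_of x_L; last exact: leq_pmulr.
by move/esym/eqP; rewrite oner_eq0.
Qed.
End FormalSeries.

Arguments cycle_series {K k B}.
Arguments basis_act {K k B}.

Section Ladder.
Local Open Scope order_scope.
Context {d : Order.disp_t} (W : orderType d).

Lemma succ_not_lim (a b : W) : is_succ a b -> ~ is_lim b.
Proof.
move=> [ab b_min] [_ b_lim]; have [c [ac cb]] := b_lim a ab.
by have := b_min c ac; rewrite leNgt cb.
Qed.

Lemma ladder_not_lim (C : W -> nat -> W) a n :
  ladder_system C -> is_lim a -> ~ is_lim (C a n).
Proof.
move=> C_ladder a_lim; have [_ _ _ C_succ] := C_ladder a a_lim.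
by have [de [_ _ [c [_ /succ_not_lim]]]] := C_succ n.
Qed.
End Ladder.

Section Psi.
Context (K : fieldType) (k : nat) {d : Order.disp_t} (W : orderType d).
Local Notation F := (Fmod K k W).
Local Notation series := (fseries K k W).

Definition psi_basis (b : Fidx W * qpath k) : series :=
  if limb (val b.1).1 && (b.2.1 == ord0) then - cycle_series (val b.1).1 b.2 else 0.

Definition psi : F -> series := mlift psi_basis.
HB.instance Definition _ := GRing.Linear.on psi.

Lemma psiU b : psi << b >> = psi_basis b.
Proof. exact: mliftU. Qed.

Lemma psi_linear : linear psi.
Proof. exact: linearP. Qed.

Lemma psi0 : psi 0 = 0.
Proof. exact: raddf0. Qed.

Lemma psiD : {morph psi : x y / x + y}.
Proof. exact: raddfD. Qed.

Lemma psiB : {morph psi : x y / x - y}.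
Proof. exact: raddfB. Qed.

Lemma psi_act x q : psi (Fact x q) = sact q (psi x).
Proof.
move: x; apply: malg_linear_ext => [a x y | a x y | b].
- by rewrite /Fact freeact_linear linearP.
- by rewrite !linearP.
rewrite /Fact freeactE mliftU psiU /basis_act (fun_if psi) raddf0 psiU /psi_basis /=.
case: (_ && _); last by rewrite sact0 if_same.
by rewrite sactN sact_cycle_series; case: ifP; rewrite ?oppr0.
Qed.

Lemma eF_basis (g : W) (n : nat) : limb g || (n == 0)%N ->
  exists2 i : Fidx W, val i = (g, n) & eF K k g n = << (i, triv ord0) >>.
Proof.
by rewrite /eF; case: insubP => [i _ <- | /negbTE -> //] _; exists i.
Qed.

Lemma psi_eF_nonlim g : ~ is_lim g -> psi (eF K k g 0) = 0.
Proof.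
move=> g_nonlim; have [i i_g ->] := eF_basis (g := g) (n := 0%N) (orbT _).
by rewrite psiU /psi_basis i_g /= /limb asboolF.
Qed.

Lemma psi_eF_lim a n : is_lim a ->
  psi (eF K k a n) = - cycle_series a (triv (@ord0 k)).
Proof.
move=> a_lim; have a_limb : limb a by apply/asboolP.
have [i i_a ->] := eF_basis (g := a) (n := n) (introT orP (or_introl a_limb)).
by rewrite psiU /psi_basis i_a /= a_limb.
Qed.
End Psi.

Lemma psi_Ggen (K : fieldType) (k : nat) {d : Order.disp_t} (W : orderType d)
    (C : W -> nat -> W) a n :
  ladder_system C -> is_lim a ->
  psi (Ggen K k C a n) = series_of << (a, triv (@ord0 k)) >>.
Proof.
move=> C_ladder a_lim; rewrite /Ggen psiD psiB psi_act.
rewrite psi_eF_nonlim; last exact: ladder_not_lim.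
by rewrite !psi_eF_lim // sactN sub0r opprK -cycle_series_sub_sact.
Qed.

Section Submodules.
Context (K : fieldType) (k : nat) {d : Order.disp_t} (W : orderType d).

Lemma gen_sub_closed (T : Fmod K k W -> Prop) : sub_closed (gen_sub T).
Proof.
split=> [P [] // | a u v Tu Tv P P_closed P_T | u q Tu P P_closed P_T].
  by case: (P_closed) => _ P_lin _; apply: P_lin; [apply: Tu | apply: Tv].
by case: (P_closed) => _ _ P_act; apply: P_act; apply: Tu.
Qed.

Lemma gen_sub_incl (T : Fmod K k W -> Prop) t : T t -> gen_sub T t.
Proof. by move=> Tt P _; apply. Qed.

Lemma Ggen_Isub (C : W -> nat -> W) a j : is_lim a -> Isub C (Ggen K k C a j).
Proof. by move=> a_lim; rewrite /Isub; apply: gen_sub_incl; exists a, j. Qed.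

Lemma psi_Isub (C : W -> nat -> W) s : ladder_system C ->
  Isub C s -> exists n : sumKQ K k W, psi s = series_of n.
Proof.
move=> C_ladder /(_ (fun s => exists n : sumKQ K k W, psi s = series_of n)).
apply; last first.
  by move=> _ [a [n [a_lim ->]]]; exists << (a, triv ord0) >>; apply: psi_Ggen.
split=> [| a u v [nu psi_u] [nv psi_v] | u q [n psi_u]].
- by exists 0; rewrite !raddf0.
- by exists (a *: nu + nv); rewrite psi_linear series_of_linear psi_u psi_v.
- by exists (freeact n q); rewrite psi_act series_of_act psi_u.
Qed.
End Submodules.

Section Extension.
Context (K : fieldType) (k : nat) {d : Order.disp_t} (W : orderType d)
  (C : W -> nat -> W) (M : rmod K k) (pi : Fmod K k W -> M)
  (hM : @realizes_Momega1 K k d W C M pi).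
Local Notation S := (@Ssub K k d W).
Local Notation N := (sumKQ K k W).
Local Notation series := (fseries K k W).

Lemma pi_linear a u v : S u -> S v -> pi (a *: u + v) = a *: pi u + pi v.
Proof. by case: hM => pi_lin _ _ _; apply: pi_lin. Qed.

Lemma pi_act u q : S u -> pi (Fact u q) = ract (pi u) q.
Proof. by case: hM => _ pi_act _ _; apply: pi_act. Qed.

Lemma pi_surj (m : M) : exists u, S u /\ pi u = m.
Proof. by case: hM => _ _ pi_surj _; apply: pi_surj. Qed.

Lemma pi_ker u : S u -> (pi u = 0 <-> Isub C u).
Proof. by case: hM => _ _ _ pi_ker; apply: pi_ker. Qed.

Lemma Ssub_closed : sub_closed S.
Proof. exact: gen_sub_closed. Qed.

Lemma Ssub_eF g n : is_lim g \/ n = 0%N -> S (eF K k g n).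
Proof.
move=> g_n; apply: gen_sub_incl; have [g_lim | g_nonlim] := pselect (is_lim g).
  by right; exists g, n.
by left; exists g; case: g_n => // ->.
Qed.

Lemma SsubD u v : S u -> S v -> S (u + v).
Proof.
have [_ S_lin _] := Ssub_closed.
by move=> Su Sv; rewrite -[u]scale1r; exact: (S_lin _ _ _ Su Sv).
Qed.

Lemma SsubN u : S u -> S (- u).
Proof.
have [S0 S_lin _] := Ssub_closed.
by move=> Su; rewrite -[- u]addr0 -scaleN1r; exact: (S_lin _ _ _ Su S0).
Qed.

Lemma Ggen_Ssub a j : is_lim a -> S (Ggen K k C a j).
Proof.
have [_ _ S_act] := Ssub_closed.
move=> a_lim; apply: SsubD; last exact: (S_act _ _ (Ssub_eF (or_introl a_lim))).
apply: SsubD; first exact: (Ssub_eF (or_intror erefl)).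
exact: (SsubN (Ssub_eF (or_introl a_lim))).
Qed.

Lemma pi0 : pi 0 = 0.
Proof.
have [S0 _ _] := Ssub_closed.
have := pi_linear 1 S0 S0; rewrite !scale1r !addr0 => pi00.
by apply: (addrI (pi 0)); rewrite addr0 -pi00.
Qed.

(* The pushout of 0 → I → S → M along ψ|_I : I → N, inside N̂ × M. *)
Definition ext_pred : {pred series * M} := fun e =>
  `[< exists s, [/\ S s, pi s = e.2 & exists n : N, e.1 = series_of n + psi s] >].

Lemma ext_pred_submod : submod_closed ext_pred.
Proof.
have [S0 S_lin _] := Ssub_closed.
split=> [|a [x1 m1] [x2 m2]].
  by apply/asboolP; exists 0; split; rewrite ?pi0 //; exists 0; rewrite !raddf0 addr0.
move=> /asboolP [s1 [S1 /= pi1 [n1 /= x1E]]] /asboolP [s2 [S2 /= pi2 [n2 /= x2E]]].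
apply/asboolP; exists (a *: s1 + s2); split => /=; first exact: S_lin.
  by rewrite pi_linear // pi1 pi2.
exists (a *: n1 + n2).
by rewrite x1E x2E series_of_linear psi_linear scalerDr addrACA.
Qed.

HB.instance Definition _ :=
  GRing.isSubmodClosed.Build K (series * M)%type ext_pred ext_pred_submod.

Record ext_car := ExtCar { ext_val :> series * M; ext_valP : ext_val \in ext_pred }.
HB.instance Definition _ := [isSub for ext_val].
HB.instance Definition _ := [Choice of ext_car by <:].
HB.instance Definition _ := [SubChoice_isSubLmodule of ext_car by <:].

Lemma ext_pred_act e q :
  e \in ext_pred -> (sact q e.1, ract e.2 q) \in ext_pred.
Proof.
have [_ _ S_act] := Ssub_closed.
case: e => x m /asboolP [s [Ss /= <- [n ->]]]; apply/asboolP.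
exists (Fact s q); split; rewrite ?pi_act //=; first exact: S_act.
by exists (freeact n q); rewrite raddfD series_of_act psi_act.
Qed.

Definition ext_act (e : ext_car) q : ext_car := ExtCar (ext_pred_act q (ext_valP e)).

Lemma ext_act_linear p (a : K) (u v : ext_car) :
  ext_act (a *: u + v) p = a *: ext_act u p + ext_act v p.
Proof. by apply: val_inj; rewrite /= linearP ract_lin. Qed.

Lemma ext_act_comp (e : ext_car) p q :
  ext_act (ext_act e p) q = if composable p q then ext_act e (pcat p q) else 0.
Proof. by apply: val_inj; rewrite /= sact_comp ract_comp; case: ifP. Qed.

Lemma ext_act_unit (e : ext_car) : \sum_(i < k.+1) ext_act e (triv i) = e.
Proof.
apply: val_inj; rewrite raddf_sum [LHS]surjective_pairing /=.
rewrite (raddf_sum fst) (raddf_sum snd) /= sact_unit ract_unit.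
by case: e => -[].
Qed.

Definition Ext : rmod K k := RMod ext_act_linear ext_act_comp ext_act_unit.

Lemma ext_in_mem (n : N) : (series_of n, 0 : M) \in ext_pred.
Proof.
have [S0 _ _] := Ssub_closed.
by apply/asboolP; exists 0; split; rewrite ?pi0 //; exists n; rewrite raddf0 addr0.
Qed.

Definition ext_in (n : N) : Ext := ExtCar (ext_in_mem n).

Definition ext_proj (e : Ext) : M := (ext_val e).2.

Lemma ext_in_hom : is_hom (@freeact K k W) (@ract _ _ Ext) ext_in.
Proof.
split=> [a u v | v p]; apply: val_inj => /=; last by rewrite series_of_act ract0.
by rewrite -[RHS]/(_, a *: (0 : M) + 0) scaler0 addr0 series_of_linear.
Qed.

Lemma ext_proj_hom : is_hom (@ract _ _ Ext) (@ract _ _ M) ext_proj.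
Proof. by []. Qed.

Lemma ext_in_inj : injective ext_in.
Proof. by move=> x y /(congr1 (fun e : Ext => (ext_val e).1)) /series_of_inj. Qed.

Lemma ext_proj_surj (m : M) : exists e : Ext, ext_proj e = m.
Proof.
have [s [Ss pi_s]] := pi_surj m.
have s_mem : (psi s, m) \in ext_pred.
  by apply/asboolP; exists s; split => //; exists 0; rewrite raddf0 add0r.
by exists (ExtCar s_mem).
Qed.

Hypothesis C_ladder : ladder_system C.

Lemma ext_proj_ker (e : Ext) : ext_proj e = 0 <-> exists n, e = ext_in n.
Proof.
split=> [|[n ->] //]; case: e => -[x m] e_mem; rewrite /ext_proj /= => m0.
have /asboolP [s [Ss /= pi_s [n /= xE]]] := e_mem.
have [n' psi_s] := psi_Isub C_ladder ((pi_ker Ss).1 (etrans pi_s m0)).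
by exists (n + n'); apply: val_inj; rewrite /= m0 xE psi_s raddfD.
Qed.

Section Splitting.
Variable sg : M -> Ext.
Hypothesis sg_hom : is_hom (@ract _ _ M) (@ract _ _ Ext) sg.
Hypothesis sg_section : forall m, ext_proj (sg m) = m.

Definition defect (s : Fmod K k W) : series := (ext_val (sg (pi s))).1 - psi s.

Lemma sg0 : sg 0 = 0.
Proof.
have [sg_lin _] := sg_hom; have := sg_lin 1 0 0; rewrite !scale1r !addr0 => sg00.
by apply: (addrI (sg 0)); rewrite addr0 -sg00.
Qed.

Lemma defect0 : defect 0 = 0.
Proof. by rewrite /defect pi0 sg0 psi0 subrr. Qed.

Lemma defect_linear a u v :
  S u -> S v -> defect (a *: u + v) = a *: defect u + defect v.
Proof.
have [sg_lin _] := sg_hom; move=> Su Sv.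
by rewrite /defect pi_linear // sg_lin psi_linear /= scalerBr opprD addrACA.
Qed.

Lemma defectD u v : S u -> S v -> defect (u + v) = defect u + defect v.
Proof. by move=> Su Sv; have := defect_linear 1 Su Sv; rewrite !scale1r. Qed.

Lemma defectN u : S u -> defect (- u) = - defect u.
Proof.
have [S0 _ _] := Ssub_closed.
by move=> Su; have := defect_linear (-1) Su S0; rewrite !scaleN1r defect0 !addr0.
Qed.

Lemma defect_act u q : S u -> defect (Fact u q) = sact q (defect u).
Proof.
have [_ sg_act] := sg_hom.
by move=> Su; rewrite /defect pi_act // sg_act /= psi_act raddfB.
Qed.

Lemma defect_series s : S s -> exists n : N, defect s = series_of n.
Proof.
have [_ S_lin _] := Ssub_closed.
move=> Ss; have /asboolP [s' [Ss' pi_s' [n xE]]] := ext_valP (sg (pi s)).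
have {}pi_s' : pi s' = pi s := etrans pi_s' (sg_section _).
have Sd : S ((-1) *: s' + s) := S_lin _ _ _ Ss' Ss.
have pi_d : pi ((-1) *: s' + s) = 0 by rewrite pi_linear // pi_s' scaleN1r addNr.
have [n' psi_d] := psi_Isub C_ladder ((pi_ker Sd).1 pi_d).
exists (n - n'); rewrite /defect xE series_ofB -psi_d psi_linear scaleN1r.
by rewrite opprD opprK addrA.
Qed.

Lemma defect_Ggen a j : is_lim a ->
  defect (Ggen K k C a j) = - series_of << (a, triv ord0) >>.
Proof.
move=> a_lim; have SG := Ggen_Ssub j a_lim.
have piG : pi (Ggen K k C a j) = 0.
  by apply/(pi_ker SG); apply: Ggen_Isub.
by rewrite /defect piG sg0 psi_Ggen // sub0r.
Qed.

Lemma defect_ladder a : is_lim a ->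
  exists j p, defect (eF K k (C a j) 0) (a, p) != 0.
Proof.
have [_ _ S_act] := Ssub_closed.
move=> a_lim; apply: contrapT => vanish.
have zero j p : defect (eF K k (C a j) 0) (a, p) = 0.
  by apply: contrapT => /eqP nz; apply: vanish; exists j, p.
have S_lim j : S (eF K k a j) := Ssub_eF (or_introl a_lim).
have S_C j : S (eF K k (C a j) 0) := Ssub_eF (or_intror erefl).
have [n defect_n] := defect_series (S_lim 0%N).
apply: (cycle_solution_not_finite (y := fun j => defect (eF K k a j)) (b := a)
  _ defect_n).
move=> j p; have := congr1 (fun f : series => f (a, p)) (defect_Ggen j a_lim).
rewrite /Ggen (defectD (SsubD (S_C j) (SsubN (S_lim j))) (S_act _ _ (S_lim j.+1))).
rewrite (defectD (S_C j) (SsubN (S_lim j))) (defectN (S_lim j)).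
rewrite (defect_act _ (S_lim j.+1)) !fctE zero add0r => rel.
by rewrite -[X in _ = _ + X]opprK -rel opprD opprK addrC subrK.
Qed.

Lemma no_section : is_omega1 W -> False.
Proof.
move=> W_omega1.
have defect_eF g : exists n : N, defect (eF K k g 0) = series_of n.
  exact: defect_series (Ssub_eF (or_intror erefl)).
pose rep g := sval (cid (defect_eF g)).
apply: (no_regressive_finite_cover W_omega1
  (A := fun g => [seq c.1 | c <- msupp (rep g)])).
move=> a a_lim; have [j [p defect_ap]] := defect_ladder a_lim.
have [_ C_below _ _] := C_ladder a_lim.
exists (C a j) => //; apply/mapP; exists (a, p) => //.
by rewrite -mcoeff_neq0; move: defect_ap; rewrite (svalP (cid (defect_eF (C a j)))).
Qed.
End Splitting.
End Extension.

Theorem claim2p7 (K : closedFieldType) (k : nat) (d : Order.disp_t)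
    (W : orderType d) (hW : is_omega1 W)
    (C : W -> nat -> W) (hC : ladder_system C)
    (M : rmod K k) (pi : Fmod K k W -> M)
    (hM : @realizes_Momega1 K k d W C M pi) :
  ext1_nonzero M (@freeact K k W).
Proof.
exists (Ext hM), (ext_in hM), (ext_proj (hM:=hM)); split.
  split; [exact: ext_in_hom | exact: ext_proj_hom | exact: ext_in_inj |
          exact: ext_proj_surj | exact: ext_proj_ker].
by move=> [sg [sg_hom sg_section]]; exact: no_section sg_hom sg_section hW.
Qed.
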